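(* There exists a strictly increasing sequence $(n_k)_{k\ge0}$ of positive integers with $n_{k+1}/n_k\to1$ as $k\to\infty$ which is a rigidity sequence; i.e. there is a continuous Borel probability measure $\sigma$ on $\mathbb{T}$ with $\hat\sigma(n_k)\to1$.
   Context: $\hat\sigma(n)=\int_{\mathbb{T}}\lambda^n\,d\sigma(\lambda)$; continuous means atomless. A strictly increasing sequence $(n_k)$ of positive integers is a rigidity sequence if there exist a probability space and a measure-preserving transformation $\varphi$ that is weakly mixing and rigid with respect to $(n_k)$ (i.e. $\mu(\varphi^{-n_k}(A)\triangle A)\to0$ for all measurable $A$); equivalently, if there is a continuous probability measure $\sigma$ on $\mathbb{T}$ with $\hat\sigma(n_k)\to1$. *)

(* The circle T is parametrised by [0,1) via t |-> exp(2 i pi t). *)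
From Stdlib Require Import Reals Rtopology.
Open Scope R_scope.

Inductive borel : (R -> Prop) -> Prop :=
| borel_open (A : R -> Prop) : open_set A -> borel A
| borel_compl (A : R -> Prop) : borel A -> borel (fun x => ~ A x)
| borel_union (A : nat -> R -> Prop) :
    (forall n, borel (A n)) -> borel (fun x => exists n, A n x)
| borel_ext (A B : R -> Prop) : borel A -> (forall x, A x <-> B x) -> borel B.

(* A Borel probability measure on T, seen as a Borel probability measure on R
   carried by [0,1) (values on non-Borel sets are irrelevant). *)
Record borel_prob_T (mu : (R -> Prop) -> R) : Prop := {
  bp_ext : forall A B, (forall x, A x <-> B x) -> mu A = mu B;
  bp_nonneg : forall A, borel A -> 0 <= mu A;
  bp_sigma_add : forall A : nat -> R -> Prop,
      (forall n, borel (A n)) ->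
      (forall i j x, i <> j -> A i x -> A j x -> False) ->
      infinite_sum (fun n => mu (A n)) (mu (fun x => exists n, A n x));
  bp_total : mu (fun x => 0 <= x < 1) = 1;
  bp_outside : mu (fun x => ~ (0 <= x < 1)) = 0
}.

(* continuous = atomless *)
Definition atomless (mu : (R -> Prop) -> R) : Prop :=
  forall x : R, mu (fun y => y = x) = 0.

(* Approximating sums for the integral of a continuous function f on [0,1)
   against mu, using the partition of [0,1) into m+1 equal half-open intervals.
   For f continuous on [0,1] these converge to the integral of f d mu. *)
Definition approx_sum (mu : (R -> Prop) -> R) (f : R -> R) (m : nat) : R :=
  sum_f_R0 (fun j => f (INR j / INR (S m)) *
                     mu (fun x => INR j / INR (S m) <= x < INR (S j) / INR (S m))) m.

Definition integral_cont (mu : (R -> Prop) -> R) (f : R -> R) (c : R) : Prop :=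
  Un_cv (approx_sum mu f) c.

(* Fourier coefficient  hat sigma(n) = int_T lambda^n d sigma(lambda)
   = int_[0,1) exp(2 i pi n t) d mu(t)  has real part re and imaginary part im. *)
Definition fourier_coeff (mu : (R -> Prop) -> R) (n : nat) (re im : R) : Prop :=
  integral_cont mu (fun t => cos (2 * PI * INR n * t)) re /\
  integral_cont mu (fun t => sin (2 * PI * INR n * t)) im.

(* Let d_j(x) in {0,1} record whether the j-th iterate of x under the piecewise linear
   expanding maps [stretch] lands in the top subinterval of length 1/(j+2); these maps
   preserve Lebesgue measure, so d_j = 1 on a set of measure 1/(j+2).  The measure sigma is
   the image of Lebesgue measure on [0,1) under g(x) = sum_j d_j(x) 2^-((j+1)^2); g is
   strictly increasing, so sigma is atomless.  For n = a 2^((J+1)^2) with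
   a <= (J+2) 2^(2J+3), the phase n g(x) is within 1/(2 pi (J+1)) of an integer unless
   d_(J+1)(x) = 1, hence |hat sigma(n) - 1| = O(1/J).  Letting a run from J+1 to
   (J+2) 2^(2J+3) at every level J gives an increasing sequence with ratios 1 + 1/a -> 1. *)

From Stdlib Require Import Reals Rtopology Arith Lra Lia Psatz Classical.
Open Scope R_scope.

(** * Elementary real analysis *)

Lemma sin_between x : 0 <= x -> - x <= sin x <= x.
Proof.
  intros Hx. destruct (Req_dec x 0) as [->|Hx0]; [rewrite sin_0; lra|].
  pose proof (sin_lt_x x ltac:(lra)). pose proof (SIN_bound x).
  destruct (Rle_lt_dec 1 x); [lra|].
  assert (0 <= sin x) by (apply sin_ge_0; pose proof PI2_3_2; lra). lra.
Qed.

Lemma Rabs_sin_le x : Rabs (sin x) <= Rabs x.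
Proof.
  apply Rabs_le. destruct (Rle_lt_dec 0 x) as [Hx|Hx].
  - rewrite Rabs_pos_eq by lra. pose proof (sin_between x Hx). lra.
  - rewrite Rabs_left by lra. pose proof (sin_between (- x) ltac:(lra)).
    rewrite sin_neg in H. lra.
Qed.

Lemma Rabs_le_inv x a : Rabs x <= a -> - a <= x <= a.
Proof.
  intros H. pose proof (Rle_abs x). pose proof (Rle_abs (- x)). rewrite Rabs_Ropp in H1. lra.
Qed.

Lemma Rabs_half x : Rabs (x / 2) = Rabs x / 2.
Proof. unfold Rdiv. rewrite Rabs_mult, (Rabs_pos_eq (/ 2)); lra. Qed.

Lemma cos_lipschitz a b : Rabs (cos a - cos b) <= Rabs (a - b).
Proof.
  rewrite form2, !Rabs_mult, (Rabs_left (-2)) by lra.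
  pose proof (Rabs_sin_le ((a - b) / 2)). rewrite Rabs_half in H.
  pose proof (Rabs_pos (sin ((a - b) / 2))).
  pose proof (SIN_bound ((a + b) / 2)) as Hs.
  assert (Rabs (sin ((a + b) / 2)) <= 1) by (apply Rabs_le; lra).
  pose proof (Rabs_pos (sin ((a + b) / 2))). nra.
Qed.

Lemma sin_lipschitz a b : Rabs (sin a - sin b) <= Rabs (a - b).
Proof.
  rewrite form4, !Rabs_mult, (Rabs_pos_eq 2) by lra.
  pose proof (Rabs_sin_le ((a - b) / 2)). rewrite Rabs_half in H.
  pose proof (Rabs_pos (sin ((a - b) / 2))).
  pose proof (COS_bound ((a + b) / 2)) as Hc.
  assert (Rabs (cos ((a + b) / 2)) <= 1) by (apply Rabs_le; lra).
  pose proof (Rabs_pos (cos ((a + b) / 2))). nra.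
Qed.

Lemma cos_scaled_lipschitz c x y : Rabs (cos (c * x) - cos (c * y)) <= Rabs c * Rabs (x - y).
Proof. rewrite <- Rabs_mult, Rmult_minus_distr_l. apply cos_lipschitz. Qed.

Lemma sin_scaled_lipschitz c x y : Rabs (sin (c * x) - sin (c * y)) <= Rabs c * Rabs (x - y).
Proof. rewrite <- Rabs_mult, Rmult_minus_distr_l. apply sin_lipschitz. Qed.

Lemma lipschitz_continuity_pt (f : R -> R) (L : R) : 0 <= L ->
  (forall a b, Rabs (f a - f b) <= L * Rabs (a - b)) -> forall x, continuity_pt f x.
Proof.
  intros HL Hf x eps Heps. exists (eps / (L + 1)). split.
  - apply Rdiv_lt_0_compat; lra.
  - intros y [_ Hy]. simpl in *. unfold R_dist in *.
    apply Rle_lt_trans with (L * Rabs (y - x)); [apply Hf|].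
    apply Rle_lt_trans with (L * (eps / (L + 1))); [apply Rmult_le_compat_l; lra|].
    apply (Rmult_lt_reg_r (L + 1)); [lra|].
    replace (L * (eps / (L + 1)) * (L + 1)) with (L * eps) by (field; lra). nra.
Qed.

Lemma continuity_pt_cos_scaled c x : continuity_pt (fun t => cos (c * t)) x.
Proof.
  exact (lipschitz_continuity_pt (fun t => cos (c * t)) _ (Rabs_pos c) (cos_scaled_lipschitz c) x).
Qed.

Lemma continuity_pt_sin_scaled c x : continuity_pt (fun t => sin (c * t)) x.
Proof.
  exact (lipschitz_continuity_pt (fun t => sin (c * t)) _ (Rabs_pos c) (sin_scaled_lipschitz c) x).
Qed.

Lemma cv_of_dist_le_inv (u : nat -> R) (l C : R) (r : nat -> nat) :
  (forall J, exists K, forall k, (K <= k)%nat -> (J <= r k)%nat) ->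
  (forall k, Rabs (u k - l) <= C / INR (r k + 1)) -> Un_cv u l.
Proof.
  intros Hr Hu eps Heps. assert (HC : 0 <= Rabs C) by apply Rabs_pos.
  destruct (archimed_cor1 (eps / (Rabs C + 1))) as [J0 [HJ0 HJ0pos]].
  { apply Rdiv_lt_0_compat; lra. }
  destruct (Hr J0) as [K HK]. exists K. intros k Hk. unfold R_dist.
  eapply Rle_lt_trans; [apply Hu|].
  assert (HJ : INR J0 <= INR (r k + 1)) by (apply le_INR; specialize (HK k Hk); lia).
  assert (HJpos : 0 < INR J0) by (apply lt_0_INR; lia).
  apply Rle_lt_trans with (Rabs C / INR J0).
  - apply Rle_trans with (Rabs C / INR (r k + 1)); unfold Rdiv.
    + apply Rmult_le_compat_r; [left; apply Rinv_0_lt_compat; lra | apply Rle_abs].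
    + apply Rmult_le_compat_l; [lra | apply Rinv_le_contravar; lra].
  - apply (Rmult_lt_compat_l (Rabs C + 1)) in HJ0; [|lra].
    replace ((Rabs C + 1) * (eps / (Rabs C + 1))) with eps in HJ0 by (field; lra).
    assert (0 < / INR J0) by (apply Rinv_0_lt_compat; lra). unfold Rdiv. nra.
Qed.

Lemma div_unit_interval v c : 0 < c -> 0 <= v < c -> 0 <= v / c < 1.
Proof.
  intros Hc [H0 H1]. split.
  - unfold Rdiv. apply Rmult_le_pos; [lra | left; apply Rinv_0_lt_compat; lra].
  - apply (Rmult_lt_reg_r c); [lra|]. unfold Rdiv. rewrite Rmult_assoc, Rinv_l; lra.
Qed.

Lemma div_between_iff c v a b : 0 < c -> (a <= v / c < b <-> c * a <= v < c * b).
Proof.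
  intros Hc. assert (Hv : v = c * (v / c)) by (field; lra).
  set (w := v / c) in *. rewrite Hv. split.
  - intros [H1 H2]. split; [apply Rmult_le_compat_l | apply Rmult_lt_compat_l]; lra.
  - intros [H1 H2]. split; [apply (Rmult_le_reg_l c) | apply (Rmult_lt_reg_l c)]; lra.
Qed.

Lemma exists_first_difference (a b : nat -> R) :
  (exists i, a i <> b i) -> exists j, (forall i, (i < j)%nat -> a i = b i) /\ a j <> b j.
Proof.
  intros [N HN]. induction N as [N IH] using lt_wf_ind.
  destruct (classic (forall i, (i < N)%nat -> a i = b i)) as [Hall | Hnot]; [now exists N|].
  apply not_all_ex_not in Hnot as [i Hi]. apply imply_to_and in Hi as [Hi Hne].
  exact (IH i Hi Hne).
Qed.

(** * The stretching maps and their digits *)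

Definition q (j : nat) : R := / INR (j + 2).

Definition stretch (j : nat) (v : R) : R :=
  if Rlt_dec v (1 - q j) then v / (1 - q j) else (v - (1 - q j)) / q j.

Fixpoint stretch_iter (j : nat) (x : R) : R :=
  match j with 0 => x | S j => stretch j (stretch_iter j x) end.

Definition digit (j : nat) (x : R) : R :=
  if Rle_dec (1 - q j) (stretch_iter j x) then 1 else 0.

Lemma q_bounds j : 0 < q j <= / 2.
Proof.
  unfold q. rewrite plus_INR. simpl. pose proof (pos_INR j).
  split; [apply Rinv_0_lt_compat | apply Rinv_le_contravar]; lra.
Qed.

Lemma one_minus_q j : 1 - q j = INR (j + 1) / INR (j + 2).
Proof. unfold q. rewrite !plus_INR. simpl. pose proof (pos_INR j). field. lra. Qed.

Lemma stretch_iter_range j x : 0 <= x < 1 -> 0 <= stretch_iter j x < 1.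
Proof.
  intro Hx. induction j as [|j IH]; simpl; auto.
  unfold stretch. pose proof (q_bounds j).
  destruct Rlt_dec; apply div_unit_interval; lra.
Qed.

Lemma digit_01 j x : digit j x = 0 \/ digit j x = 1.
Proof. unfold digit; destruct Rle_dec; auto. Qed.

Lemma digit_1 j x : 0 <= x < 1 -> digit j x <> 0 -> 1 - q j <= stretch_iter j x < 1.
Proof.
  intros Hx He. pose proof (stretch_iter_range j x Hx). unfold digit in He.
  destruct Rle_dec; [lra | congruence].
Qed.

Lemma stretch_preimage j v a b : 0 <= v < 1 -> 0 <= a -> b <= 1 ->
  (a <= stretch j v < b <->
   (1 - q j) * a <= v < (1 - q j) * b \/ 1 - q j + q j * a <= v < 1 - q j + q j * b).
Proof.
  intros Hv Ha Hb. pose proof (q_bounds j). unfold stretch.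
  destruct (Rlt_dec v (1 - q j)).
  - rewrite div_between_iff by lra. assert (0 <= q j * a) by (apply Rmult_le_pos; lra).
    intuition lra.
  - rewrite div_between_iff by lra. assert ((1 - q j) * b <= 1 - q j) by nra.
    intuition lra.
Qed.

Lemma stretch_dilates j v w : 0 <= v -> v < w -> w < 1 ->
  (v < 1 - q j <-> w < 1 - q j) ->
  (w - v) * INR (j + 2) / INR (j + 1) <= stretch j w - stretch j v.
Proof.
  intros Hv Hvw Hw Hside. pose proof (q_bounds j) as Hq. pose proof (one_minus_q j) as Hc.
  assert (Hp : 0 < INR (j + 1)) by (apply lt_0_INR; lia).
  assert (Hp2 : INR (j + 2) = INR (j + 1) + 1) by (rewrite !plus_INR; simpl; lra).
  assert (Hqj : q j = / INR (j + 2)) by reflexivity.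
  unfold stretch.
  destruct (Rlt_dec v (1 - q j)) as [Hv'|Hv']; destruct (Rlt_dec w (1 - q j)) as [Hw'|Hw'];
    try tauto.
  - rewrite Hc. right. field. lra.
  - replace ((w - (1 - q j)) / q j - (v - (1 - q j)) / q j) with ((w - v) * INR (j + 2))
      by (rewrite Hqj; field; lra).
    unfold Rdiv. rewrite Rmult_assoc. apply Rmult_le_compat_l; [lra|].
    rewrite <- (Rmult_1_r (INR (j + 2))) at 2. apply Rmult_le_compat_l; [lra|].
    rewrite <- Rinv_1. apply Rinv_le_contravar; [lra|]. rewrite plus_INR. simpl.
    pose proof (pos_INR j). lra.
Qed.

Lemma stretch_iter_separates x y j : 0 <= x -> x < y -> y < 1 ->
  (forall i, (i < j)%nat -> digit i x = digit i y) ->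
  (y - x) * INR (j + 1) <= stretch_iter j y - stretch_iter j x.
Proof.
  intros Hx Hxy Hy. induction j as [|j IH]; intro Hagree; [simpl; lra|].
  assert (IHj := IH (fun i Hi => Hagree i ltac:(lia))).
  assert (Hdj : digit j x = digit j y) by (apply Hagree; lia).
  destruct (stretch_iter_range j x ltac:(lra)) as [Hx0 Hx1].
  destruct (stretch_iter_range j y ltac:(lra)) as [Hy0 Hy1].
  assert (Hp : 0 < INR (j + 1)) by (apply lt_0_INR; lia).
  assert (Hlt : stretch_iter j x < stretch_iter j y) by nra.
  assert (Hside : stretch_iter j x < 1 - q j <-> stretch_iter j y < 1 - q j).
  { unfold digit in Hdj.
    destruct (Rle_dec (1 - q j) (stretch_iter j x));
      destruct (Rle_dec (1 - q j) (stretch_iter j y));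
      try lra; split; lra. }
  pose proof (stretch_dilates j (stretch_iter j x) (stretch_iter j y) Hx0 Hlt Hy1 Hside) as Hd.
  cbn [stretch_iter]. replace (S j + 1)%nat with (j + 2)%nat by lia.
  eapply Rle_trans; [|exact Hd].
  replace ((y - x) * INR (j + 2)) with ((y - x) * INR (j + 1) * INR (j + 2) / INR (j + 1))
    by (field; lra).
  unfold Rdiv. apply Rmult_le_compat_r; [left; apply Rinv_0_lt_compat; lra|].
  apply Rmult_le_compat_r; [apply pos_INR | exact IHj].
Qed.

Lemma exists_digit_difference x y : 0 <= x -> x < y -> y < 1 -> exists i, digit i x <> digit i y.
Proof.
  intros Hx Hxy Hy. apply NNPP. intro Hn.
  destruct (archimed_cor1 (y - x)) as [N [HN HNpos]]; [lra|].
  assert (HNR : 0 < INR N) by (apply lt_0_INR; lia).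
  assert (Hd : (y - x) * INR (N + 1) <= stretch_iter N y - stretch_iter N x).
  { apply stretch_iter_separates; auto. intros i _. apply NNPP. intro. apply Hn. eauto. }
  pose proof (stretch_iter_range N x ltac:(lra)). pose proof (stretch_iter_range N y ltac:(lra)).
  apply (Rmult_lt_compat_r (INR N)) in HN; [|lra]. rewrite Rinv_l in HN by lra.
  rewrite plus_INR in Hd. simpl in Hd. nra.
Qed.

(** * The coding map *)

Definition M (j : nat) : R := 2 ^ ((j + 1) * (j + 1)).

Definition gpart (x : R) (J : nat) : R := sum_f_R0 (fun j => digit j x / M j) J.

Lemma M_pos j : 0 < M j.
Proof. unfold M. apply pow_lt; lra. Qed.

Lemma M_S j : M (S j) = 8 * 4 ^ j * M j.
Proof.
  unfold M. replace ((S j + 1) * (S j + 1))%nat with (3 + 2 * j + (j + 1) * (j + 1))%nat by lia.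
  rewrite !pow_add, pow_mult. replace (2 ^ 2) with 4 by ring. ring.
Qed.

Lemma M_S_ge j : 8 * M j <= M (S j).
Proof.
  rewrite M_S. pose proof (M_pos j). assert (1 <= 4 ^ j) by (apply pow_R1_Rle; lra). nra.
Qed.

Lemma M_1 : M 1 = 16.
Proof. unfold M; simpl; lra. Qed.

(* Stated telescopically so that the induction on [k] goes through. *)
Lemma gpart_tail x J k :
  0 <= gpart x (J + k) - gpart x J <= 2 / M (S J) - 2 / M (S (J + k)).
Proof.
  induction k as [|k IH]; [rewrite Nat.add_0_r; lra|].
  rewrite Nat.add_succ_r. unfold gpart in *. simpl sum_f_R0.
  set (i := S (J + k)) in *.
  pose proof (M_pos i). pose proof (M_S_ge i). pose proof (M_pos (S i)).
  assert (2 / M (S i) <= / M i).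
  { apply (Rmult_le_reg_r (M i * M (S i))); [nra|].
    replace (2 / M (S i) * (M i * M (S i))) with (2 * M i) by (field; lra).
    replace (/ M i * (M i * M (S i))) with (M (S i)) by (field; lra). lra. }
  assert (0 <= digit i x / M i <= / M i).
  { pose proof (Rinv_0_lt_compat _ H). unfold Rdiv.
    destruct (digit_01 i x) as [-> | ->]; lra. }
  lra.
Qed.

Lemma gpart_growing x : Un_growing (gpart x).
Proof. intro n. pose proof (gpart_tail x n 1). rewrite Nat.add_1_r in H. lra. Qed.

Lemma gpart_0 x : 0 <= gpart x 0 <= / 2.
Proof.
  unfold gpart, M; simpl. destruct (digit_01 0 x) as [-> | ->]; lra.
Qed.

Lemma gpart_bounded x : has_ub (gpart x).
Proof.
  exists (/ 2 + 2 / M 1). intros y [n ->].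
  pose proof (gpart_tail x 0 n). pose proof (gpart_0 x). pose proof (M_pos (S n)).
  assert (0 < 2 / M (S n)) by (apply Rdiv_lt_0_compat; lra).
  simpl in *. lra.
Qed.

Definition g (x : R) : R :=
  proj1_sig (growing_cv (gpart x) (gpart_growing x) (gpart_bounded x)).

Lemma g_cv x : Un_cv (gpart x) (g x).
Proof. unfold g. destruct growing_cv; auto. Qed.

Lemma gpart_le_g x J : gpart x J <= g x.
Proof. apply growing_ineq; [apply gpart_growing | apply g_cv]. Qed.

Lemma g_le_gpart x J : g x <= gpart x J + 2 / M (S J).
Proof.
  apply (Rle_cv_lim (Un := fun k => gpart x (k + J)) (Vn := fun _ => gpart x J + 2 / M (S J))).
  - intro k. rewrite Nat.add_comm. pose proof (gpart_tail x J k).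
    pose proof (M_pos (S (J + k))).
    assert (0 < 2 / M (S (J + k))) by (apply Rdiv_lt_0_compat; lra). lra.
  - apply CV_shift', g_cv.
  - intros eps Heps. exists 0%nat. intros. unfold R_dist. rewrite Rminus_diag, Rabs_R0. lra.
Qed.

Lemma g_range x : 0 <= g x < 1.
Proof.
  pose proof (gpart_le_g x 0). pose proof (g_le_gpart x 0). pose proof (gpart_0 x).
  rewrite M_1 in H0. lra.
Qed.

Lemma gpart_diff x y j : (forall i, (i < j)%nat -> digit i x = digit i y) ->
  gpart y j - gpart x j = (digit j y - digit j x) / M j.
Proof.
  intros H. pose proof (M_pos j). destruct j as [|j]; unfold gpart; simpl; [field; lra|].
  rewrite (sum_eq (fun i => digit i x / M i) (fun i => digit i y / M i) j);
    [field; lra | intros i Hi; rewrite (H i); [reflexivity | lia]].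
Qed.

Lemma g_strict x y : 0 <= x -> x < y -> y < 1 -> g x < g y.
Proof.
  intros Hx Hxy Hy.
  destruct (exists_first_difference _ _ (exists_digit_difference x y Hx Hxy Hy))
    as [j [Hagree Hne]].
  assert (Hsep := stretch_iter_separates x y j Hx Hxy Hy Hagree).
  assert (Hp : 0 < INR (j + 1)) by (apply lt_0_INR; lia).
  assert (Hdig : digit j x = 0 /\ digit j y = 1).
  { unfold digit in *. destruct (Rle_dec (1 - q j) (stretch_iter j x));
      destruct (Rle_dec (1 - q j) (stretch_iter j y)); try lra; nra. }
  pose proof (gpart_diff x y j Hagree) as Hg. destruct Hdig as [Hdx Hdy]. rewrite Hdx, Hdy in Hg.
  pose proof (gpart_le_g y j). pose proof (g_le_gpart x j).
  pose proof (M_S_ge j). pose proof (M_pos j). pose proof (M_pos (S j)).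
  assert (2 / M (S j) < (1 - 0) / M j).
  { apply (Rmult_lt_reg_r (M (S j) * M j)); [nra|].
    replace (2 / M (S j) * (M (S j) * M j)) with (2 * M j) by (field; lra).
    replace ((1 - 0) / M j * (M (S j) * M j)) with (M (S j)) by (field; lra). lra. }
  lra.
Qed.

(* Monotone extension of [g] to R, hence Borel measurable. *)
Definition G (x : R) : R := if Rlt_dec x 0 then 0 else if Rlt_dec x 1 then g x else 1.

Lemma G_eq x : 0 <= x < 1 -> G x = g x.
Proof.
  intros [H0 H1]. unfold G. destruct Rlt_dec; [lra|]. destruct Rlt_dec; [reflexivity | lra].
Qed.

Lemma G_nondecreasing x y : x <= y -> G x <= G y.
Proof.
  intro Hxy. unfold G.
  destruct (Rlt_dec x 0); destruct (Rlt_dec y 0); try lra;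
  destruct (Rlt_dec x 1); destruct (Rlt_dec y 1); try lra;
  try (pose proof (g_range y); lra); try (pose proof (g_range x); lra).
  destruct (Req_dec x y) as [-> | Hne]; [lra|]. apply Rlt_le, g_strict; lra.
Qed.

Lemma G_inj x y : 0 <= x < 1 -> 0 <= y < 1 -> G x = G y -> x = y.
Proof.
  intros Hx Hy. rewrite (G_eq x Hx), (G_eq y Hy). intro H.
  destruct (Rtotal_order x y) as [Hl | [Hl | Hl]]; auto.
  - pose proof (g_strict x y ltac:(lra) Hl ltac:(lra)). lra.
  - pose proof (g_strict y x ltac:(lra) Hl ltac:(lra)). lra.
Qed.

(** * Phases along the sequence *)

Definition Mnat (j : nat) : nat := 2 ^ ((j + 1) * (j + 1)).

Lemma Mnat_M j : INR (Mnat j) = M j.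
Proof. unfold Mnat, M. rewrite pow_INR. reflexivity. Qed.

Lemma digit_scaled_nat x J j : (j <= J)%nat -> exists n : nat, M J * (digit j x / M j) = INR n.
Proof.
  intro Hj. pose proof (M_pos j).
  set (d := ((J + 1) * (J + 1) - (j + 1) * (j + 1))%nat).
  assert (Hdiv : M J = M j * INR (2 ^ d)).
  { unfold M, d. rewrite pow_INR, <- pow_add. f_equal. nia. }
  rewrite Hdiv. destruct (digit_01 j x) as [-> | ->].
  - exists 0%nat. simpl. field. lra.
  - exists (2 ^ d)%nat. field. lra.
Qed.

Lemma gpart_scaled_nat x J j : (j <= J)%nat -> exists N : nat, M J * gpart x j = INR N.
Proof.
  induction j as [|j IH]; intro Hj; unfold gpart in *; simpl.
  - exact (digit_scaled_nat x J 0 Hj).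
  - destruct (IH ltac:(lia)) as [N HN]. destruct (digit_scaled_nat x J (S j) Hj) as [n Hn].
    exists (N + n)%nat. rewrite plus_INR, <- HN, <- Hn. ring.
Qed.

Lemma square_le_pow4 J : ((J + 1) * (J + 2) <= 2 * 4 ^ J)%nat.
Proof.
  induction J as [|J IH]; simpl; [lia|].
  assert ((J + 2) * (J + 3) <= 4 * ((J + 1) * (J + 2)))%nat by nia. lia.
Qed.

Lemma phase_error_le J : 2 * PI * ((INR J + 2) / (16 * 4 ^ J)) <= / INR (J + 1).
Proof.
  pose proof (square_le_pow4 J) as Hsq. apply le_INR in Hsq.
  rewrite !mult_INR, pow_INR, !plus_INR in Hsq. rewrite plus_INR.
  replace (INR 1) with 1 in * by reflexivity. replace (INR 2) with 2 in * by (simpl; lra).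
  replace (INR 4) with 4 in * by (simpl; lra).
  assert (0 < 4 ^ J) by (apply pow_lt; lra). pose proof (pos_INR J). pose proof PI_4.
  apply (Rmult_le_reg_r (8 * 4 ^ J * (INR J + 1))); [nra|].
  replace (2 * PI * ((INR J + 2) / (16 * 4 ^ J)) * (8 * 4 ^ J * (INR J + 1)))
    with (PI * ((INR J + 1) * (INR J + 2))) by (field; lra).
  replace (/ (INR J + 1) * (8 * 4 ^ J * (INR J + 1))) with (8 * 4 ^ J) by (field; lra). nra.
Qed.

(* [M J] is a multiple of [M j] for j <= J, so [a M J gpart x J] is an integer; the digit
   J+1 vanishes and the remaining tail is below 2 / M (J+2). *)
Lemma phase_near_integer J a x : digit (S J) x = 0 -> (a <= (J + 2) * (8 * 4 ^ J))%nat ->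
  exists (N : nat) (s : R), INR a * M J * g x = INR N + s /\ 0 <= 2 * PI * s <= / INR (J + 1).
Proof.
  intros Hd Ha. destruct (gpart_scaled_nat x J J (le_n J)) as [N HN].
  exists (a * N)%nat, (INR a * M J * (g x - gpart x J)). split; [rewrite mult_INR, <- HN; ring|].
  assert (Hgp : gpart x (S J) = gpart x J).
  { unfold gpart. simpl. fold (gpart x J). rewrite Hd. unfold Rdiv. ring. }
  pose proof (gpart_le_g x J). pose proof (g_le_gpart x (S J)) as Htail.
  rewrite Hgp, (M_S (S J)), (M_S J) in Htail. change (4 ^ S J) with (4 * 4 ^ J) in Htail.
  apply le_INR in Ha. rewrite !mult_INR, pow_INR, plus_INR in Ha.
  replace (INR 2) with 2 in Ha by (simpl; lra). replace (INR 4) with 4 in Ha by (simpl; lra).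
  replace (INR 8) with 8 in Ha by (simpl; lra).
  pose proof (phase_error_le J). set (Q := 4 ^ J) in *. set (d := g x - gpart x J).
  assert (0 < Q) by (apply pow_lt; lra). pose proof (pos_INR J). pose proof (pos_INR a).
  pose proof (M_pos J). pose proof PI_RGT_0.
  assert (Hd0 : 0 <= d) by (unfold d; lra).
  assert (Hs : INR a * M J * d <= (INR J + 2) / (16 * Q)).
  { replace ((INR J + 2) / (16 * Q))
      with ((INR J + 2) * (8 * Q) * M J * (2 / (8 * (4 * Q) * (8 * Q * M J)))) by (field; lra).
    apply Rmult_le_compat; [nra | lra | apply Rmult_le_compat_r | unfold d]; lra. }
  split; [apply Rmult_le_pos; [lra | apply Rmult_le_pos; [apply Rmult_le_pos|]]; lra|].
  apply Rle_trans with (2 * PI * ((INR J + 2) / (16 * Q))); [apply Rmult_le_compat_l|]; lra.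
Qed.

Lemma phase_cos_sin_small J a x : digit (S J) x = 0 -> (a <= (J + 2) * (8 * 4 ^ J))%nat ->
  1 - cos (2 * PI * INR (a * Mnat J) * g x) <= / INR (J + 1) /\
  Rabs (sin (2 * PI * INR (a * Mnat J) * g x)) <= / INR (J + 1).
Proof.
  intros Hd Ha. destruct (phase_near_integer J a x Hd Ha) as [N [s [Hs Hsmall]]].
  assert (Harg : 2 * PI * INR (a * Mnat J) * g x = 2 * PI * s + 2 * INR N * PI).
  { rewrite mult_INR, Mnat_M. transitivity (2 * PI * (INR a * M J * g x)); [ring|].
    rewrite Hs. ring. }
  rewrite Harg, cos_period, sin_period. split.
  - pose proof (cos_lipschitz (2 * PI * s) 0) as Hc. rewrite cos_0, Rminus_0_r in Hc.
    rewrite (Rabs_pos_eq (2 * PI * s)) in Hc by lra. apply Rabs_le_inv in Hc. lra.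
  - pose proof (Rabs_sin_le (2 * PI * s)). rewrite (Rabs_pos_eq (2 * PI * s)) in H by lra. lra.
Qed.


(** * The sequence *)

(* [state k = (J, a)] gives the k-th term [a 2^((J+1)^2)].  The levels glue because
   (J+2) 8 4^J 2^((J+1)^2) = (J+2) 2^((J+2)^2), so every ratio of consecutive terms
   is 1 + 1/a. *)
Fixpoint state (k : nat) : nat * nat :=
  match k with
  | 0 => (0, 1)%nat
  | S k => let (J, a) := state k in
           if Nat.ltb (a + 1) ((J + 2) * (8 * 4 ^ J)) then (J, a + 1)%nat else (S J, J + 2)%nat
  end.

Definition level (k : nat) : nat := fst (state k).

Definition coef (k : nat) : nat := snd (state k).

Definition rigid_seq (k : nat) : nat := (coef k * Mnat (level k))%nat.

Lemma Mnat_pos J : (0 < Mnat J)%nat.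
Proof. unfold Mnat. apply Nat.neq_0_lt_0, Nat.pow_nonzero. lia. Qed.

Lemma Mnat_S J : Mnat (S J) = (8 * 4 ^ J * Mnat J)%nat.
Proof.
  unfold Mnat. replace ((S J + 1) * (S J + 1))%nat with (3 + 2 * J + (J + 1) * (J + 1))%nat by lia.
  rewrite !Nat.pow_add_r, Nat.pow_mul_r. reflexivity.
Qed.

Lemma state_bounds k : (level k + 1 <= coef k < (level k + 2) * (8 * 4 ^ level k))%nat.
Proof.
  unfold level, coef. induction k as [|k IH]; [simpl; lia|].
  cbn [state]. destruct (state k) as [J a]. cbn [fst snd] in IH.
  destruct (Nat.ltb_spec (a + 1) ((J + 2) * (8 * 4 ^ J))); cbn [fst snd]; [lia|].
  assert (0 < 4 ^ S J)%nat by (apply Nat.neq_0_lt_0, Nat.pow_nonzero; lia). nia.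
Qed.

Lemma rigid_seq_S k : rigid_seq (S k) = ((coef k + 1) * Mnat (level k))%nat.
Proof.
  pose proof (state_bounds k). unfold rigid_seq, level, coef in *. cbn [state].
  destruct (state k) as [J a]. cbn [fst snd] in *.
  destruct (Nat.ltb_spec (a + 1) ((J + 2) * (8 * 4 ^ J))); cbn [fst snd]; [reflexivity|].
  rewrite Mnat_S. replace (a + 1)%nat with ((J + 2) * (8 * 4 ^ J))%nat by lia. ring.
Qed.

Lemma rigid_seq_pos_0 : (0 < rigid_seq 0)%nat.
Proof. apply Nat.mul_pos_pos; [cbv; lia | apply Mnat_pos]. Qed.

Lemma rigid_seq_increasing k : (rigid_seq k < rigid_seq (S k))%nat.
Proof. rewrite rigid_seq_S. unfold rigid_seq. pose proof (Mnat_pos (level k)). nia. Qed.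

Lemma rigid_seq_ratio k : INR (rigid_seq (S k)) / INR (rigid_seq k) = 1 + / INR (coef k).
Proof.
  rewrite rigid_seq_S. unfold rigid_seq. pose proof (state_bounds k).
  pose proof (lt_0_INR _ (Mnat_pos (level k))).
  assert (0 < INR (coef k)) by (apply lt_0_INR; lia).
  rewrite !mult_INR, plus_INR. simpl. field. lra.
Qed.

Lemma level_unbounded J0 : exists K, forall k, (K <= k)%nat -> (J0 <= level k)%nat.
Proof.
  exists ((J0 + 1) * Mnat J0)%nat. intros k Hk. apply Nat.nlt_ge. intro HJ.
  assert (Hk' : (k <= rigid_seq k)%nat).
  { clear. induction k as [|k IH]; [lia|]. pose proof (rigid_seq_increasing k). lia. }
  pose proof (state_bounds k). unfold rigid_seq in Hk'.
  assert (HM : (Mnat (S (level k)) <= Mnat J0)%nat).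
  { unfold Mnat. apply Nat.pow_le_mono_r; [lia|]. nia. }
  rewrite Mnat_S in HM. pose proof (Mnat_pos (level k)).
  assert (coef k * Mnat (level k) < (level k + 2) * (8 * 4 ^ level k) * Mnat (level k))%nat
    by (apply Nat.mul_lt_mono_pos_r; lia).
  nia.
Qed.

Definition theta (k : nat) : R := / INR (level k + 1).

Lemma theta_pos k : 0 < theta k.
Proof. apply Rinv_0_lt_compat, lt_0_INR. lia. Qed.

Lemma rigid_seq_ratio_near_one k :
  Rabs (INR (rigid_seq (S k)) / INR (rigid_seq k) - 1) <= theta k.
Proof.
  rewrite rigid_seq_ratio. replace (1 + / INR (coef k) - 1) with (/ INR (coef k)) by ring.
  pose proof (state_bounds k). assert (0 < INR (level k + 1)) by (apply lt_0_INR; lia).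
  rewrite Rabs_pos_eq by (left; apply Rinv_0_lt_compat, lt_0_INR; lia).
  apply Rinv_le_contravar; [lra | apply le_INR; lia].
Qed.

Lemma q_level_le_theta k : q (S (level k)) <= theta k.
Proof. apply Rinv_le_contravar; [apply lt_0_INR; lia | apply le_INR; lia]. Qed.

Definition wave_cos (n : nat) (t : R) : R := cos (2 * PI * INR n * t).

Definition wave_sin (n : nat) (t : R) : R := sin (2 * PI * INR n * t).

Lemma wave_cos_lipschitz n x y :
  Rabs (wave_cos n x - wave_cos n y) <= Rabs (2 * PI * INR n) * Rabs (x - y).
Proof. apply cos_scaled_lipschitz. Qed.

Lemma wave_sin_lipschitz n x y :
  Rabs (wave_sin n x - wave_sin n y) <= Rabs (2 * PI * INR n) * Rabs (x - y).
Proof. apply sin_scaled_lipschitz. Qed.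

Lemma wave_cos_bound n t : Rabs (wave_cos n t) <= 1.
Proof. apply Rabs_le, COS_bound. Qed.

Lemma wave_sin_bound n t : Rabs (wave_sin n t) <= 1.
Proof. apply Rabs_le, SIN_bound. Qed.

Definition bad_set (n : nat) (th : R) (t : R) : Prop :=
  th < 1 - wave_cos n t \/ th < Rabs (wave_sin n t).

Lemma bad_set_digit k x : 0 <= x < 1 ->
  bad_set (rigid_seq k) (theta k) (G x) -> digit (S (level k)) x <> 0.
Proof.
  intros Hx Hbad Hd. unfold theta in Hbad. pose proof (state_bounds k) as [_ Ha].
  destruct (phase_cos_sin_small (level k) (coef k) x Hd ltac:(lia)) as [Hc Hs].
  unfold bad_set, wave_cos, wave_sin, rigid_seq in Hbad. rewrite G_eq in Hbad by exact Hx. lra.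
Qed.


(** * The image measure *)

Module CodeMeasure.
From HB Require Import structures.
From mathcomp Require Import all_boot all_order all_algebra.
From mathcomp Require Import all_classical all_reals all_analysis.
From mathcomp Require Import Rstruct Rstruct_topology measurable_realfun.
Import Order.TTheory GRing.Theory Num.Theory.
Import numFieldNormedType.Exports.
Local Open Scope classical_set_scope.
Local Open Scope ring_scope.
Local Open Scope R_scope.

Notation RT := (measurableTypeR R).

Definition Ico (a b : R) : set RT := fun x => a <= x < b.

Lemma IcoE a b : Ico a b = [set` `[a, b[].
Proof.
  apply/seteqP; split => x /=.
  - by move=> [/RleP H1 /RltP H2]; rewrite in_itv /= H1 H2.
  - by rewrite in_itv /= => /andP [/RleP H1 /RltP H2].
Qed.

Lemma measurable_Ico a b : measurable (Ico a b).
Proof. rewrite IcoE; exact: measurable_itv. Qed.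

Lemma lebesgue_Ico a b : a <= b -> lebesgue_measure (Ico a b) = (b - a)%:E.
Proof.
  move=> Hab. rewrite IcoE lebesgue_measure_itv /= lte_fin.
  case: (Rle_lt_or_eq_dec _ _ Hab) => [/RltP -> // | <-].
  by rewrite ltxx subrr.
Qed.

Lemma Ico_split {a b c} : a <= b -> b <= c -> Ico a c = Ico a b `|` Ico b c.
Proof.
  move=> Hab Hbc; apply/seteqP; split => x; rewrite /Ico /=.
  - by case: (Rlt_le_dec x b) => Hx [H1 H2]; [left | right]; lra.
  - by case=> -[H1 H2]; lra.
Qed.

Lemma Ico_disj a b c : Ico a b `&` Ico b c = set0.
Proof. by apply/seteqP; split => x //; rewrite /Ico /= => -[[_ H1] [H2 _]]; lra. Qed.

Section finite_measure_on_R.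
Context {m : {measure set RT -> \bar R}}.
Hypothesis m_setT : (m setT < +oo)%E.

Lemma measure_lty {A} : measurable A -> (m A < +oo)%E.
Proof. by move=> mA; apply: le_lt_trans m_setT; apply: le_measure; rewrite ?inE. Qed.

Lemma measure_fin_num {A} : measurable A -> m A \is a fin_num.
Proof. by move=> mA; rewrite ge0_fin_numE ?measure_lty. Qed.

Lemma measure_fine {A} : measurable A -> m A = (fine (m A))%:E.
Proof. by move=> mA; rewrite fineK // measure_fin_num. Qed.

Lemma fine_measure_le {A B} : measurable A -> measurable B -> A `<=` B ->
  fine (m A) <= fine (m B).
Proof.
  move=> mA mB AB; apply/RleP; apply: fine_le; rewrite ?measure_fin_num //.
  by apply: le_measure; rewrite ?inE.
Qed.

Lemma fine_measureU {A B} : measurable A -> measurable B -> A `&` B = set0 ->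
  fine (m (A `|` B)) = fine (m A) + fine (m B).
Proof. by move=> mA mB AB; rewrite measureU // fineD // measure_fin_num. Qed.

Lemma continuous_bounded_integrable (f : R -> R) b D : measurable D ->
  (forall x, continuity_pt f x) -> (forall x, Rabs (f x) <= b) ->
  m.-integrable D (EFin \o f).
Proof.
  move=> mD cf bf; apply: measurable_bounded_integrable => //; first exact: measure_lty.
  - apply: measurable_funTS; apply: continuous_measurable_fun => x.
    exact/continuity_ptE.
  - exists b; split; first by rewrite num_real.
    by move=> c bc x _ /=; apply: le_trans (ltW bc); rewrite -RabsE; apply/RleP.
Qed.

Lemma Rintegral_near_cst (f : R -> R) b (D : set RT) (c e : R) : measurable D ->
  (forall x, continuity_pt f x) -> (forall x, Rabs (f x) <= b) ->
  (forall x, D x -> Rabs (f x - c) <= e) ->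
  Rabs (\int[m]_(x in D) f x - c * fine (m D)) <= e * fine (m D).
Proof.
  move=> mD cf bf near.
  have int_f := continuous_bounded_integrable f b D mD cf bf.
  have int_cst k : m.-integrable D (EFin \o (fun=> k)).
    by apply: (continuous_bounded_integrable _ (Rabs k)) => // x;
      [exact: continuity_pt_const | exact: Rle_refl].
  have lower : (c - e) * fine (m D) <= \int[m]_(x in D) f x.
    rewrite RmultE -Rintegral_cst //; apply/RleP; apply: le_Rintegral => // x Dx.
    by apply/RleP; have := Rabs_le_inv _ _ (near x Dx); lra.
  have upper : \int[m]_(x in D) f x <= (c + e) * fine (m D).
    rewrite RmultE -Rintegral_cst //; apply/RleP; apply: le_Rintegral => // x Dx.
    by apply/RleP; have := Rabs_le_inv _ _ (near x Dx); lra.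
  apply: Rabs_le; lra.
Qed.

Lemma Rintegral_near_cst_except (f : R -> R) b (D B : set RT) (c e1 e2 : R) :
  measurable D -> measurable B ->
  (forall x, continuity_pt f x) -> (forall x, Rabs (f x) <= b) -> 0 <= e1 -> 0 <= e2 ->
  (forall x, D x -> Rabs (f x - c) <= e1) -> (forall x, D x -> ~ B x -> Rabs (f x - c) <= e2) ->
  Rabs (\int[m]_(x in D) f x - c * fine (m D)) <= e1 * fine (m B) + e2 * fine (m D).
Proof.
  move=> mD mB cf bf e1_ge0 e2_ge0 near1 near2.
  have mDB : measurable (D `&` B) by exact: measurableI.
  have mDnB : measurable (D `&` ~` B) by apply: measurableI => //; exact: measurableC.
  have disj : D `&` B `&` (D `&` ~` B) = set0 by rewrite setIACA setICr setI0.
  have DE : D = D `&` B `|` D `&` ~` B by rewrite -setIUr setUv setIT.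
  have in_B := Rintegral_near_cst f b (D `&` B) c e1 mDB cf bf (fun x Dx => near1 x (proj1 Dx)).
  have off_B := Rintegral_near_cst f b (D `&` ~` B) c e2 mDnB cf bf
    (fun x Dx => near2 x (proj1 Dx) (proj2 Dx)).
  have le_B := fine_measure_le mDB mB (@subIsetr _ _ _).
  have le_D := fine_measure_le mDnB mD (@subIsetl _ _ _).
  have int_split : \int[m]_(x in D) f x =
      \int[m]_(x in D `&` B) f x + \int[m]_(x in D `&` ~` B) f x.
    rewrite {1}DE Rintegral_setU //; last by rewrite /disj_set disj.
    by rewrite -DE; exact: (continuous_bounded_integrable f b D).
  have measure_split : fine (m D) = fine (m (D `&` B)) + fine (m (D `&` ~` B)).
    by rewrite {1}DE fine_measureU.
  rewrite int_split {1}measure_split.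
  set I1 := \int[m]_(x in D `&` B) f x. set I2 := \int[m]_(x in D `&` ~` B) f x.
  replace (I1 + I2 - c * (fine (m (D `&` B)) + fine (m (D `&` ~` B))))
    with ((I1 - c * fine (m (D `&` B))) + (I2 - c * fine (m (D `&` ~` B)))) by ring.
  apply: Rle_trans; first exact: Rabs_triang.
  apply: Rplus_le_compat; [apply: Rle_trans in_B _ | apply: Rle_trans off_B _];
    exact: Rmult_le_compat_l.
Qed.

Definition grid (n j : nat) : R := INR j / INR (S n).

Lemma grid_S n j : grid n (S j) = grid n j + / INR (S n).
Proof. rewrite /grid S_INR; have := pos_INR n; rewrite S_INR => ?; field; lra. Qed.

Lemma grid_ge0 n j : 0 <= grid n j.
Proof.
  apply: Rmult_le_pos; first exact: pos_INR.
  by left; apply: Rinv_0_lt_compat; exact: (lt_0_INR _ (Nat.lt_0_succ n)).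
Qed.

Section lipschitz_integrand.
Variables (f : R -> R) (L b : R).
Hypothesis L_ge0 : 0 <= L.
Hypothesis f_lipschitz : forall x y, Rabs (f x - f y) <= L * Rabs (x - y).
Hypothesis f_bounded : forall x, Rabs (f x) <= b.

Let f_cont := lipschitz_continuity_pt f L L_ge0 f_lipschitz.

Lemma Rintegral_Ico_split {x y z} : x <= y -> y <= z ->
  \int[m]_(t in Ico x z) f t = \int[m]_(t in Ico x y) f t + \int[m]_(t in Ico y z) f t.
Proof.
  move=> Hxy Hyz; rewrite (Ico_split Hxy Hyz) Rintegral_setU //; try exact: measurable_Ico.
  - by rewrite -(Ico_split Hxy Hyz); apply: (continuous_bounded_integrable f b) => //;
      exact: measurable_Ico.
  - by rewrite /disj_set Ico_disj.
Qed.

Lemma grid_cell_Rintegral n j :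
  Rabs (\int[m]_(x in Ico (grid n j) (grid n (S j))) f x -
        f (grid n j) * fine (m (Ico (grid n j) (grid n (S j)))))
  <= L / INR (S n) * fine (m (Ico (grid n j) (grid n (S j)))).
Proof.
  apply: (Rintegral_near_cst f b) => //; first exact: measurable_Ico.
  move=> x; rewrite /Ico grid_S => -[H1 H2].
  apply: Rle_trans; first exact: f_lipschitz.
  rewrite Rabs_pos_eq; last lra.
  apply: Rmult_le_compat_l => //; lra.
Qed.

Lemma grid_partial_sum_Rintegral n k :
  Rabs (sum_f_R0 (fun j => f (grid n j) * fine (m (Ico (grid n j) (grid n (S j))))) k -
        \int[m]_(x in Ico 0 (grid n (S k))) f x)
  <= L / INR (S n) * fine (m (Ico 0 (grid n (S k)))).
Proof.
  elim: k => [|k IH].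
  - by rewrite /= Rabs_minus_sym; have := grid_cell_Rintegral n 0; rewrite /grid /= Rdiv_0_l.
  - have h0 := grid_ge0 n (S k).
    have h1 : grid n (S k) <= grid n (S (S k))
      by rewrite (grid_S n (S k));
        have := Rinv_0_lt_compat _ (lt_0_INR (S n) (Nat.lt_0_succ n)); lra.
    rewrite /= (Rintegral_Ico_split h0 h1) (Ico_split h0 h1) fine_measureU;
      try exact: measurable_Ico; last exact: Ico_disj.
    have := grid_cell_Rintegral n (S k); rewrite Rabs_minus_sym => cell.
    set A := sum_f_R0 _ k in IH *; set B := \int[m]_(x in Ico 0 _) f x in IH *.
    set C := \int[m]_(x in Ico (grid n (S k)) _) f x in cell *.
    set t := f (grid n (S k)) * _ in cell *.
    replace (A + t - (B + C)) with ((A - B) + (t - C)) by ring.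
    apply: Rle_trans; first exact: Rabs_triang.
    rewrite Rmult_plus_distr_l; exact: Rplus_le_compat.
Qed.

Lemma approx_sum_cv : Un_cv (approx_sum (fun A => fine (m A)) f) (\int[m]_(x in Ico 0 1) f x).
Proof.
  apply: (cv_of_dist_le_inv _ _ (L * fine (m (Ico 0 1))) id) => [J | n]; first by exists J.
  have := grid_partial_sum_Rintegral n n.
  have -> : grid n (S n) = 1 by rewrite /grid; field; rewrite S_INR; have := pos_INR n; lra.
  by move=> H; apply: Rle_trans H _; rewrite /id Nat.add_1_r /Rdiv; right; ring.
Qed.

End lipschitz_integrand.

End finite_measure_on_R.

Definition stretch_iter_window (J : nat) (a b : R) : set RT :=
  fun x => 0 <= x < 1 /\ a <= stretch_iter J x < b.

Lemma stretch_iter_window_S J a b : 0 <= a -> b <= 1 ->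
  stretch_iter_window J.+1 a b =
  stretch_iter_window J ((1 - q J) * a) ((1 - q J) * b) `|`
  stretch_iter_window J (1 - q J + q J * a) (1 - q J + q J * b).
Proof.
  move=> Ha Hb; apply/seteqP; split => x /=.
  - move=> [Hx H]. have := proj1 (stretch_preimage J _ a b (stretch_iter_range J x Hx) Ha Hb) H.
    by case=> K; [left | right].
  - by case=> -[Hx H]; split=> //;
      apply/(stretch_preimage J _ a b (stretch_iter_range J x Hx) Ha Hb);
      [left | right].
Qed.

Lemma lebesgue_stretch_iter_window J a b : 0 <= a -> a <= b -> b <= 1 ->
  measurable (stretch_iter_window J a b) /\
  lebesgue_measure (stretch_iter_window J a b) = (b - a)%:E.
Proof.
  elim: J a b => [|J IH] a b Ha Hab Hb.
  - have -> : stretch_iter_window 0 a b = Ico a b.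
      by apply/seteqP; split => x; rewrite /stretch_iter_window /Ico /=; [case | split]; lra.
    split; [exact: measurable_Ico | exact: lebesgue_Ico].
  - have [Hq0 Hq1] := q_bounds J.
    have [m1 e1] := IH ((1 - q J) * a) ((1 - q J) * b) ltac:(nra) ltac:(nra) ltac:(nra).
    have [m2 e2] := IH (1 - q J + q J * a) (1 - q J + q J * b) ltac:(nra) ltac:(nra) ltac:(nra).
    rewrite stretch_iter_window_S //; split; first exact: measurableU.
    rewrite measureU //; last by apply/seteqP; split => x //= [[_ H1] [_ H2]]; nra.
    apply: etrans; first exact: (congr2 (fun x y => (x + y)%E) e1 e2).
    rewrite -EFinD; congr EFin; rewrite -!RminusE -!RplusE; lra.
Qed.

Lemma measurable_G : measurable_fun (T := RT) (U := RT) setT G.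
Proof.
  apply: nondecreasing_measurable => // x y /RleP Hxy; apply/RleP; exact: G_nondecreasing.
Qed.

Definition code_measure (A : set RT) : \bar R :=
  lebesgue_measure (G @^-1` A `&` Ico 0 1 : set RT).

Lemma measurable_code_preimage (A : set RT) : measurable A ->
  measurable (G @^-1` A `&` Ico 0 1 : set RT).
Proof.
  move=> mA; apply: measurableI; last exact: measurable_Ico.
  by rewrite -[X in measurable X]setTI; exact: measurable_G.
Qed.

Lemma code_measure0 : code_measure set0 = 0%E.
Proof. by rewrite /code_measure preimage_set0 set0I measure0. Qed.

Lemma code_measure_ge0 (A : set RT) : (0 <= code_measure A)%E.
Proof. exact: measure_ge0. Qed.

Lemma code_measure_sigma_additive : semi_sigma_additive code_measure.
Proof.
  move=> F mF tF mUF; rewrite /code_measure preimage_bigcup setI_bigcupl.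
  apply: measure_semi_sigma_additive => [n | | ].
  - exact: measurable_code_preimage.
  - apply/trivIsetP => /= i j _ _ ij; rewrite setIACA -preimage_setI.
    by move/trivIsetP : tF => /(_ _ _ _ _ ij) ->//; rewrite preimage_set0 set0I.
  - by rewrite -setI_bigcupl -preimage_bigcup; exact: measurable_code_preimage.
Qed.

HB.instance Definition _ := isMeasure.Build _ _ _ code_measure
  code_measure0 code_measure_ge0 code_measure_sigma_additive.

Lemma G_preimage_Ico01 (A : set RT) : Ico 0 1 `<=` A -> G @^-1` A `&` Ico 0 1 = Ico 0 1.
Proof.
  move=> sA; apply/seteqP; split => [x [] // | x Hx]; split => //.
  by apply: sA; rewrite /Ico /= G_eq //; exact: g_range.
Qed.

Lemma code_measure_Ico01 : code_measure (Ico 0 1) = 1%E.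
Proof.
  by rewrite /code_measure G_preimage_Ico01 // lebesgue_Ico ?subr0 //; lra.
Qed.

Lemma code_measure_setT_lty : (code_measure setT < +oo)%E.
Proof. by rewrite /code_measure G_preimage_Ico01 // lebesgue_Ico ?ltry //; lra. Qed.

Lemma code_measure_outside : code_measure (~` Ico 0 1) = 0%E.
Proof.
  rewrite /code_measure; have -> : G @^-1` (~` Ico 0 1) `&` Ico 0 1 = set0; last exact: measure0.
  apply/seteqP; split => x // [H Hx]; apply: H; rewrite /Ico /= G_eq //; exact: g_range.
Qed.

Lemma code_measure_set1 y : code_measure [set y] = 0%E.
Proof.
  rewrite /code_measure.
  have [[z [Gz Iz]] | none] := pselect (exists z, (G @^-1` [set y] `&` Ico 0 1) z).
  - apply: (subset_measure0 (measurable_code_preimage _ (measurable_set1 y))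
             (measurable_set1 z)) => [w [Gw Iw] | ]; last exact: lebesgue_measure_set1.
    by apply: G_inj => //; rewrite Gz Gw.
  - have -> : G @^-1` [set y] `&` Ico 0 1 = set0; last exact: measure0.
    by apply/seteqP; split => x // Hx; apply: none; exists x.
Qed.

Definition mu (A : R -> Prop) : R := fine (code_measure A).

Lemma open_set_open (A : R -> Prop) : open_set A -> open (A : set R).
Proof.
  move=> HA; rewrite openE => x Ax; have [[d dpos] Hd] := HA x Ax.
  apply/nbhs_ballP; exists d; first by apply/RltP.
  move=> y /= Hy; apply: Hd; rewrite /disc /=.
  by move: Hy; rewrite /ball /= -RabsE -RminusE => /RltP; rewrite Rabs_minus_sym.
Qed.

Lemma borel_measurable (A : R -> Prop) : borel A -> measurable (A : set RT).
Proof.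
  elim => {A} [A /open_set_open | A _ mA | A _ mA | A B _ mA HAB].
  - exact: open_measurable.
  - exact: measurableC.
  - have -> : (fun x => exists n, A n x) = \bigcup_n (A n : set RT).
      by apply/seteqP; split => x /= [n]; exists n.
    exact: bigcupT_measurable.
  - by have -> : B = A by apply/funext => x; apply/propext; split => /HAB.
Qed.

Lemma mu_sigma_additive (A : nat -> R -> Prop) : (forall n, borel (A n)) ->
  (forall i j x, i <> j -> A i x -> A j x -> False) ->
  infinite_sum (fun n => mu (A n)) (mu (fun x => exists n, A n x)).
Proof.
  move=> bA dA; have mA n : measurable (A n : set RT) by exact: borel_measurable.
  have tA : trivIset setT (A : nat -> set RT).
    by apply/trivIsetP => i j _ _ /eqP ij; apply/seteqP; split => x // [] /(dA i j x ij).
  have -> : (fun x => exists n, A n x) = \bigcup_n (A n : set RT).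
    by apply/seteqP; split => x /= [n]; exists n.
  have mU : measurable (\bigcup_n (A n : set RT)) by exact: bigcupT_measurable.
  have fin B : measurable B -> code_measure B = (fine (code_measure B))%:E.
    exact: (measure_fine code_measure_setT_lty).
  have cv : (fun n => \sum_(0 <= i < n) mu (A i)) @ \oo --> mu (\bigcup_n A n).
    have -> : (fun n => \sum_(0 <= i < n) mu (A i)) =
              fine \o (fun n => \sum_(0 <= i < n) code_measure (A i)).
      by apply/funext => n /=; rewrite -EFin_sum_fine // => i _; rewrite (fin _ (mA i)).
    apply: fine_cvg; rewrite -fin //; exact: measure_semi_sigma_additive.
  move=> eps /RltP eps_gt0.
  have [N _ HN] := iffLR (@cvgrPdist_lt _ R^o _ _ _ _ _) cv eps eps_gt0.
  exists N => n Hn; rewrite /R_dist RabsE sum_f_R0E distrC.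
  by apply/RltP; apply: HN; rewrite /=; apply/ssrnat.leP; lia.
Qed.

Lemma mu_borel_prob : borel_prob_T mu.
Proof.
  split.
  - by move=> A B HAB; have -> : A = B by apply/funext => x; apply/propext.
  - by move=> A _; apply/RleP; apply: fine_ge0; exact: measure_ge0.
  - exact: mu_sigma_additive.
  - by rewrite /mu (_ : (fun x => _) = Ico 0 1) // code_measure_Ico01.
  - by rewrite /mu (_ : (fun x => _) = ~` Ico 0 1) // code_measure_outside.
Qed.

Lemma mu_atomless : atomless mu.
Proof. by move=> x; rewrite /mu (_ : (fun y => y = x) = [set x]) // code_measure_set1. Qed.

Lemma measurable_superlevel (h : R -> R) (th : R) : (forall x, continuity_pt h x) ->
  measurable ((fun t => th < h t) : set RT).
Proof.
  move=> ch; have := continuous_measurable_fun (fun x => iffLR (continuity_ptE h x) (ch x)).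
  move=> /(_ measurableT `]th, +oo[%classic (measurable_itv _)); rewrite setTI.
  congr measurable; apply/seteqP; split => x /=; rewrite in_itv /= andbT; by move/RltP.
Qed.

Lemma measurable_bad_set n th : measurable (bad_set n th : set RT).
Proof.
  apply: measurableU; apply: measurable_superlevel => x.
  - apply: continuity_pt_minus; first exact: continuity_pt_const.
    exact: continuity_pt_cos_scaled.
  - apply: continuity_pt_comp; last exact: Rcontinuity_abs.
    exact: continuity_pt_sin_scaled.
Qed.

Lemma mu_bad_set k : mu (bad_set (rigid_seq k) (theta k)) <= q (S (level k)).
Proof.
  set J := level k; have [Hq0 Hq1] := q_bounds (S J).
  have [mW eW] :=
    lebesgue_stretch_iter_window (S J) (1 - q (S J)) 1 ltac:(lra) ltac:(lra) ltac:(lra).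
  have -> : q (S J) = fine (lebesgue_measure (stretch_iter_window (S J) (1 - q (S J)) 1)).
    by rewrite eW /= -!RminusE; ring.
  apply/RleP; apply: fine_le.
  - exact: (measure_fin_num code_measure_setT_lty (measurable_bad_set _ _)).
  - by rewrite eW.
  - rewrite /code_measure; apply: le_measure; rewrite ?inE //.
      exact: (measurable_code_preimage _ (measurable_bad_set _ _)).
    move=> x [bad Ix]; split => //; apply: digit_1 => //; exact: bad_set_digit.
Qed.

Definition re (k : nat) : R := \int[code_measure]_(x in Ico 0 1) wave_cos (rigid_seq k) x.
Definition im (k : nat) : R := \int[code_measure]_(x in Ico 0 1) wave_sin (rigid_seq k) x.

Lemma fourier_coeff_rigid_seq k : fourier_coeff mu (rigid_seq k) (re k) (im k).
Proof.
  split.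
  - exact: (approx_sum_cv code_measure_setT_lty _ _ _ (Rabs_pos _) (wave_cos_lipschitz _)
             (wave_cos_bound _)).
  - exact: (approx_sum_cv code_measure_setT_lty _ _ _ (Rabs_pos _) (wave_sin_lipschitz _)
             (wave_sin_bound _)).
Qed.

Lemma re_near_one k : Rabs (re k - 1) <= 2 * q (S (level k)) + theta k.
Proof.
  set n := rigid_seq k.
  have near x : Rabs (wave_cos n x - 1) <= 2.
    by have := Rabs_le_inv _ _ (wave_cos_bound n x) => ?; apply: Rabs_le; lra.
  have near_good x : ~ bad_set n (theta k) x -> Rabs (wave_cos n x - 1) <= theta k.
    rewrite /bad_set => good; have := Rabs_le_inv _ _ (wave_cos_bound n x) => ?.
    by apply: Rabs_le; lra.
  have := Rintegral_near_cst_except code_measure_setT_lty (wave_cos n) 1 (Ico 0 1)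
    (bad_set n (theta k)) 1 2 (theta k) (measurable_Ico 0 1) (measurable_bad_set n _)
    (continuity_pt_cos_scaled _) (wave_cos_bound n) ltac:(lra) (Rlt_le _ _ (theta_pos k))
    (fun x _ => near x) (fun x _ => near_good x).
  rewrite /= code_measure_Ico01 /= Rmult_1_l Rmult_1_r -/(re k).
  move=> H; apply: Rle_trans H _; apply: Rplus_le_compat_r.
  apply: Rmult_le_compat_l; [lra | exact: mu_bad_set].
Qed.

Lemma im_near_zero k : Rabs (im k - 0) <= q (S (level k)) + theta k.
Proof.
  set n := rigid_seq k.
  have near x : Rabs (wave_sin n x - 0) <= 1 by rewrite Rminus_0_r; exact: wave_sin_bound.
  have near_good x : ~ bad_set n (theta k) x -> Rabs (wave_sin n x - 0) <= theta k.
    by rewrite /bad_set Rminus_0_r => good; lra.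
  have := Rintegral_near_cst_except code_measure_setT_lty (wave_sin n) 1 (Ico 0 1)
    (bad_set n (theta k)) 0 1 (theta k) (measurable_Ico 0 1) (measurable_bad_set n _)
    (continuity_pt_sin_scaled _) (wave_sin_bound n) ltac:(lra) (Rlt_le _ _ (theta_pos k))
    (fun x _ => near x) (fun x _ => near_good x).
  rewrite /= code_measure_Ico01 /= Rmult_0_l Rmult_1_l Rmult_1_r -/(im k).
  move=> H; apply: Rle_trans H _; apply: Rplus_le_compat_r; exact: mu_bad_set.
Qed.

End CodeMeasure.

Theorem mainTheorem16 :
  exists nk : nat -> nat,
    (0 < nk 0)%nat /\
    (forall k, (nk k < nk (S k))%nat) /\
    Un_cv (fun k => INR (nk (S k)) / INR (nk k)) 1 /\
    exists mu : (R -> Prop) -> R,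
      borel_prob_T mu /\ atomless mu /\
      exists re im : nat -> R,
        (forall k, fourier_coeff mu (nk k) (re k) (im k)) /\
        Un_cv re 1 /\ Un_cv im 0.
Proof.
  exists rigid_seq. split; [exact rigid_seq_pos_0|]. split; [exact rigid_seq_increasing|].
  split.
  { apply (cv_of_dist_le_inv _ _ 1 level level_unbounded). intro k.
    unfold Rdiv at 2. rewrite Rmult_1_l. exact (rigid_seq_ratio_near_one k). }
  exists CodeMeasure.mu. split; [exact CodeMeasure.mu_borel_prob|].
  split; [exact CodeMeasure.mu_atomless|].
  exists CodeMeasure.re, CodeMeasure.im. split; [exact CodeMeasure.fourier_coeff_rigid_seq|].
  pose proof q_level_le_theta as Hq. pose proof theta_pos as Hth.
  split; [apply (cv_of_dist_le_inv _ _ 3 level level_unbounded) |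
          apply (cv_of_dist_le_inv _ _ 2 level level_unbounded)]; intro k.
  - pose proof (CodeMeasure.re_near_one k). specialize (Hq k). unfold theta in *. unfold Rdiv. lra.
  - pose proof (CodeMeasure.im_near_zero k). specialize (Hq k). unfold theta in *. unfold Rdiv. lra.
Qed.
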